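(* Consider the following game for an adversary $\mathcal{A}=(\mathcal{A}_M,\mathcal{A}_L,\mathcal{A}_R)$ with parameter $n=n(\lambda)$: (1) The challenger samples a uniformly random invertible $U\in\mathbb{F}_2^{n\times n}$, lets $A$ be the span of its first $n/2$ columns, samples $s\leftarrow\mathsf{CS}(A)$ and $t\leftarrow\mathsf{CS}(A^\perp)$ uniformly, and sends $|A_{s,t}\rangle$ to $\mathcal{A}_M$. (2) $\mathcal{A}_M$ may abort (the game outcome is then $\bot$); otherwise it produces a bipartite state on registers $\mathbf{L}\mathbf{R}$, sending $\mathbf{L}$ to $\mathcal{A}_L$ and $\mathbf{R}$ to $\mathcal{A}_R$. (3) The challenger samples $r_L,r_R\leftarrow\mathbb{F}_2^n$ uniformly; $\mathcal{A}_L$ receives $(U,r_L)$ and outputs $b_0^l$, $\mathcal{A}_R$ receives $(U,r_R)$ and outputs $b_1^r$. The adversary wins iff $b_0^l\oplus b_1^r=\langle r_L,s\rangle\oplus\langle r_R,t\rangle$. Then for any adversary $\mathcal{A}$ with $\Pr[\text{outcome}\ne\bot]\ge 1/\mathrm{poly}(\lambda)$, $$\frac{\Pr[\text{outcome}=1]}{\Pr[\text{outcome}\ne\bot]}\le\frac12+\mathrm{negl}(\lambda).$$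
   Context: Coset state: $|A_{s,t}\rangle=\frac{1}{\sqrt{|A|}}\sum_{a\in A}(-1)^{\langle a,t\rangle}|a+s\rangle$. Canonical coset representatives: let $A\le\mathbb{F}_2^n$ be the span of the columns of an invertible $U$ with indices in a set $C$. $\mathsf{Can}_A(s):=Uw$ where $w$ is $U^{-1}s$ with the coordinates indexed by $C$ replaced by zeros; $\mathsf{Can}_{A^\perp}(s'):=U^{-t}w'$ where $w'$ is $U^{t}s'$ with coordinates not indexed by $C$ replaced by zeros; $\mathsf{CS}(A)$ and $\mathsf{CS}(A^\perp)$ are the respective images. Outcome $1/0/\bot$ means win/lose/abort. One may use as known that without the abort option, every adversary wins this game (the XOR version) with probability at most $1/2+\mathrm{negl}(\lambda)$. *)

From HB Require Import structures.
From mathcomp Require Import all_boot all_order all_algebra.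
From mathcomp Require Import complex reals.
Set Implicit Arguments. Unset Strict Implicit. Unset Printing Implicit Defensive.
Import Order.TTheory GRing.Theory Num.Theory Num.Def.
Local Open Scope ring_scope.

Section Game.
Variable R : realType.
Local Notation C := R[i].

(* An operator on the Hilbert space C^T (T a finite type) is a T x T
   array of complex numbers, indexed by the computational basis. *)
Definition op (T : finType) := T -> T -> C.
Definition idop (T : finType) : op T := fun i j => (i == j)%:R.
Definition subop (T : finType) (M N : op T) : op T := fun i j => M i j - N i j.

Definition psd (T : finType) (M : op T) : Prop :=
  (forall i j, M j i = (M i j)^*) /\
  (forall v : T -> C, 0 <= \sum_i \sum_j (v i)^* * M i j * v j).

(* A two-outcome POVM {E, I - E}: E is the effect of outcome 1 (true). *)
Definition effect (T : finType) (E : op T) : Prop := psd E /\ psd (subop (@idop T) E).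
Definition povm_el (T : finType) (E : op T) (b : bool) : op T :=
  if b then E else subop (@idop T) E.

Definition vec n := 'cV['F_2]_n.
Definition mat n := 'M['F_2]_n.
Definition ip n (x y : vec n) : 'F_2 := (x^T *m y) ord0 ord0.
Definition GL n : {set mat n} := [set U : mat n | U \in unitmx].

(* A = span of the columns of U indexed by C = {0,...,n/2 - 1} *)
Definition inC n (i : 'I_n) : bool := (i < n./2)%N.
Definition subA n (U : mat n) : {set vec n} :=
  [set U *m v | v : vec n & [forall i, ~~ inC i ==> (v i ord0 == 0)]].
Definition CanA n (U : mat n) (s : vec n) : vec n :=
  U *m \col_i (if inC i then 0 else (invmx U *m s) i ord0).
Definition CanAperp n (U : mat n) (s' : vec n) : vec n :=
  (invmx U)^T *m \col_i (if inC i then (U^T *m s') i ord0 else 0).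
Definition CS_A n (U : mat n) : {set vec n} := [set CanA U s | s : vec n].
Definition CS_Aperp n (U : mat n) : {set vec n} := [set CanAperp U s | s : vec n].

Definition sgn (b : 'F_2) : C := if b == 0 then 1 else -1.

Definition coset_state n (U : mat n) (s t : vec n) : vec n -> C :=
  fun x => (sqrtC (#|subA U|%:R))^-1 *
           \sum_(a in subA U) sgn (ip a t) * (x == a + s)%:R.

Definition avg (T : finType) (S : {set T}) (f : T -> C) : C :=
  (#|S|%:R)^-1 * \sum_(x in S) f x.

(* A_M : a trace-non-increasing CP map from C^(F_2^n) to H_L (x) H_R,
   given by Kraus operators kraus k; the missing trace is the abort
   probability.  A_L (resp. A_R), on input (U, r), performs the
   two-outcome measurement with effect effL U r (resp. effR U r). *)
Record adversary (n : nat) := Adversary {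
  TL : finType; TR : finType; KI : finType;
  kraus : KI -> TL -> TR -> vec n -> C;
  effL : mat n -> vec n -> op TL;
  effR : mat n -> vec n -> op TR }.
Arguments kraus {n} a _ _ _ _.
Arguments effL {n} a _ _ _ _.
Arguments effR {n} a _ _ _ _.

Definition KdK n (A : adversary n) : op (vec n) :=
  fun x y => \sum_k \sum_l \sum_r (kraus A k l r x)^* * kraus A k l r y.

Definition valid_adv n (A : adversary n) : Prop :=
  psd (subop (@idop _) (KdK A)) /\
  (forall U r, effect (effL A U r)) /\ (forall U r, effect (effR A U r)).

Definition nonaborting n (A : adversary n) : Prop := KdK A = @idop _.

Definition out_vec n (A : adversary n) (U : mat n) (s t : vec n) k l r : C :=
  \sum_x kraus A k l r x * coset_state U s t x.

Arguments out_vec {n} A U s t k l r.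

(* probability that A_M does not abort, for fixed U, s, t *)
Definition p_cont n (A : adversary n) U s t : C :=
  \sum_k \sum_l \sum_r (out_vec A U s t k l r)^* * out_vec A U s t k l r.

(* probability of not aborting and of outputs (bl, br) *)
Definition p_out n (A : adversary n) U s t rL rR (bl br : bool) : C :=
  \sum_k \sum_l \sum_l' \sum_r \sum_r'
    (out_vec A U s t k l r)^* * povm_el (effL A U rL) bl l l' *
    povm_el (effR A U rR) br r r' * out_vec A U s t k l' r'.

Definition Pr_notbot n (A : adversary n) : C :=
  avg (GL n) (fun U => avg (CS_A U) (fun s => avg (CS_Aperp U) (fun t =>
    p_cont A U s t))).

Definition Pr_win n (A : adversary n) : C :=
  avg (GL n) (fun U => avg (CS_A U) (fun s => avg (CS_Aperp U) (fun t =>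
  avg [set: vec n] (fun rL => avg [set: vec n] (fun rR =>
    \sum_(bl : bool) \sum_(br : bool)
      ((bl (+) br) == (ip rL s + ip rR t != 0))%:R * p_out A U s t rL rR bl br))))).

Definition negligible (f : nat -> C) : Prop :=
  forall c : nat, exists N : nat, forall lam : nat, (N <= lam)%N ->
    `|f lam| <= (lam%:R ^+ c)^-1.

Definition noticeable (f : nat -> C) : Prop :=
  exists c N : nat, forall lam : nat, (N <= lam)%N -> (lam%:R ^+ c)^-1 <= f lam.

(* the known bound for the XOR game without abort option *)
Definition xor_game_bound (n : nat -> nat) : Prop :=
  forall B : forall lam, adversary (n lam),
    (forall lam, valid_adv (B lam) /\ nonaborting (B lam)) ->
    exists nu : nat -> C, negligible nu /\
      forall lam, Pr_win (B lam) <= 2^-1 + nu lam.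

End Game.

(* Guessing on abort.  Complete the first stage A_M, with Kraus operators K_k,
   to a trace-preserving map by adding Kraus operators M_j with
   sum_j M_j^* M_j = I - sum_k K_k^* K_k (a square root of the defect, from the
   spectral theorem).  The M_j send the coset state to a fresh basis vector
   None (x) None of L (x) R, which A_L and A_R measure with effect 1/2, i.e.
   they output independent uniform bits there.  The completed adversary never
   aborts and wins with probability Pr[win] + (1 - Pr[not bot]) / 2, so the
   XOR bound yields Pr[win] <= Pr[not bot] / 2 + negl, and dividing by the
   noticeable Pr[not bot] keeps the error negligible. *)

From mathcomp Require Import all_boot all_order all_algebra.
From mathcomp Require Import complex reals.
From mathcomp Require Import ring.
From Stdlib Require Import FunctionalExtensionality.
Set Implicit Arguments. Unset Strict Implicit. Unset Printing Implicit Defensive.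
Import Order.TTheory GRing.Theory Num.Theory Num.Def.
Local Open Scope ring_scope.
Local Open Scope sesquilinear_scope.

Section Operators.
Variable R : realType.
Local Notation C := R[i].

Definition qform (T : finType) (M : op R T) (v : T -> C) : C :=
  \sum_i \sum_j (v i)^* * M i j * v j.

Lemma psd_qform_ge0 (T : finType) (M : op R T) v : psd M -> 0 <= qform M v.
Proof. by case=> _; apply. Qed.

Lemma qform_sum (T I : finType) (H : I -> op R T) v :
  \sum_i qform (H i) v = qform (fun x y => \sum_i H i x y) v.
Proof.
rewrite /qform exchange_big; apply: eq_bigr => x _.
rewrite exchange_big; apply: eq_bigr => y _.
by rewrite mulr_sumr mulr_suml.
Qed.

Lemma qform_kraus (T I : finType) (F : I -> T -> C) v :
  \sum_i (\sum_x F i x * v x)^* * (\sum_y F i y * v y) =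
  qform (fun x y => \sum_i (F i x)^* * F i y) v.
Proof.
rewrite -qform_sum; apply: eq_bigr => i _.
rewrite rmorph_sum mulr_suml; apply: eq_bigr => x _.
by rewrite mulr_sumr; apply: eq_bigr => y _; rewrite rmorphM /=; ring.
Qed.

Lemma qformB (T : finType) (M N : op R T) v :
  qform (subop M N) v = qform M v - qform N v.
Proof.
rewrite /qform -sumrB; apply: eq_bigr => x _.
by rewrite -sumrB; apply: eq_bigr => y _; rewrite /subop; ring.
Qed.

Lemma qform_id (T : finType) v : qform (@idop R T) v = \sum_x (v x)^* * v x.
Proof.
apply: eq_bigr => x _; rewrite (bigD1 x) //= big1 => [|y]; last first.
  by rewrite /idop eq_sym => /negbTE->; rewrite mulr0 mul0r.
by rewrite /idop eqxx mulr1 addr0.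
Qed.

Lemma psd0 (T : finType) : psd (fun _ _ : T => 0 : C).
Proof.
split=> [|v]; first by rewrite conjC0.
by rewrite big1 // => x _; rewrite big1 // => y _; rewrite mulr0 mul0r.
Qed.

Definition op_mx (T : finType) (P : op R T) : 'M[C]_#|T| :=
  \matrix_(i, j) P (enum_val i) (enum_val j).

Lemma qform_op_mx (T : finType) (P : op R T) v :
  qform P v = \sum_i \sum_j (v (enum_val i))^* * op_mx P i j * v (enum_val j).
Proof.
rewrite /qform big_enum_val; apply: eq_bigr => i _.
by rewrite big_enum_val; apply: eq_bigr => j _; rewrite mxE.
Qed.

Section Spectral.
Variables (T : finType) (P : op R T).
Hypothesis Ppsd : psd P.
Let S := spectralmx (op_mx P).
Let d := spectral_diag (op_mx P).

Lemma psd_op_mx_spectral : op_mx P = S^t* *m diag_mx d *m S.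
Proof.
have herm : (op_mx P)^t* = op_mx P.
  by apply/matrixP => k l; rewrite !mxE (proj1 Ppsd) conjCK.
have /orthomx_spectralP : op_mx P \is normalmx by rewrite qualifE herm.
by rewrite invmx_unitary ?spectral_unitarymx.
Qed.

Lemma psd_spectral_diag_ge0 k : 0 <= d 0 k.
Proof.
have SSt : S *m S^t* = 1%:M by apply/unitarymxP; exact: spectral_unitarymx.
have : (S *m op_mx P *m S^t*) k k = d 0 k.
  rewrite psd_op_mx_spectral !mulmxA SSt mul1mx -mulmxA SSt mulmx1.
  by rewrite mxE eqxx mulr1n.
move <-; rewrite (_ : _ k k = qform P (fun x => (S k (enum_rank x))^* )).
  exact: psd_qform_ge0.
rewrite qform_op_mx mxE exchange_big; apply: eq_bigr => j _.
by rewrite !mxE big_distrl; apply: eq_bigr => i _; rewrite !enum_valK conjCK !mxE.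
Qed.

Definition psd_factor k x : C := sqrtC (d 0 k) * S k (enum_rank x).

Lemma psd_factorE x y : P x y = \sum_k (psd_factor k x)^* * psd_factor k y.
Proof.
have -> : P x y = op_mx P (enum_rank x) (enum_rank y) by rewrite mxE !enum_rankK.
rewrite psd_op_mx_spectral mxE; apply: eq_bigr => k _.
rewrite mul_mx_diag !mxE rmorphM /=.
have d_ge0 := psd_spectral_diag_ge0 k.
rewrite [(sqrtC _)^*]geC0_conj ?sqrtC_ge0 // mulrACA -expr2 sqrtCK.
by rewrite mulrA (mulrC (d 0 k)).
Qed.
End Spectral.

Lemma big_option (V : nmodType) (T : finType) (F : option T -> V) :
  \sum_i F i = F None + \sum_a F (Some a).
Proof.
rewrite (bigD1 None) //=; congr (_ + _).
rewrite (reindex_omap Some id) /=; last by case.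
by apply: eq_bigl => a; rewrite eqxx.
Qed.

Lemma big_option_None0 (T : finType) (F : option T -> C) :
  F None = 0 -> \sum_i F i = \sum_a F (Some a).
Proof. by move=> F0; rewrite big_option F0 add0r. Qed.

Lemma big_option_Some0 (T : finType) (F : option T -> C) :
  (forall a, F (Some a) = 0) -> \sum_i F i = F None.
Proof. by move=> F0; rewrite big_option big1 ?addr0. Qed.

Definition blk_diag (T : finType) (E : op R T) (c : C) : op R (option T) :=
  fun i j => match i, j with
  | Some a, Some b => E a b
  | None, None => c
  | _, _ => 0 end.

Lemma psd_blk_diag (T : finType) (E : op R T) c :
  psd E -> 0 <= c -> psd (blk_diag E c).
Proof.
move=> E_psd c_ge0; have [Eherm _] := E_psd; split.
  by case=> [a|] [b|] //=; rewrite ?conjC0 // geC0_conj.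
move=> v; rewrite big_option big_option /= big1 => [|a _]; last by rewrite mulr0 mul0r.
rewrite addr0 mulrAC; apply: addr_ge0; first by rewrite mulr_ge0 // mulrC mul_conjC_ge0.
rewrite (_ : \sum_a _ = qform E (fun a => v (Some a))) ?psd_qform_ge0 //.
by apply: eq_bigr => a _; rewrite big_option /= mulr0 mul0r add0r.
Qed.

Lemma subop_blk_diag (T : finType) (E : op R T) c :
  subop (@idop R _) (blk_diag E c) = blk_diag (subop (@idop R _) E) (1 - c).
Proof.
apply: functional_extensionality => i; apply: functional_extensionality => j.
by case: i j => [a|] [b|]; rewrite /subop /idop //= subr0.
Qed.

Lemma effect_blk_diag (T : finType) (E : op R T) c :
  effect E -> 0 <= c <= 1 -> effect (blk_diag E c).
Proof.
move=> [E_psd IE_psd] /andP[c_ge0 c_le1]; split; first exact: psd_blk_diag.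
by rewrite subop_blk_diag; apply: psd_blk_diag; rewrite ?subr_ge0.
Qed.

Lemma povm_el_blk_diag (T : finType) (E : op R T) c b :
  povm_el (blk_diag E c) b = blk_diag (povm_el E b) (if b then c else 1 - c).
Proof. by case: b => //=; rewrite subop_blk_diag. Qed.

Definition expect_tensor (TL TR : finType) (EL : op R TL) (ER : op R TR)
    (v : TL -> TR -> C) : C :=
  \sum_l \sum_l' \sum_r \sum_r' (v l r)^* * EL l l' * ER r r' * v l' r'.

Section BlockExpectation.
Variables (TL TR : finType) (EL : op R TL) (ER : op R TR) (cL cR : C).
Variable v : option TL -> option TR -> C.

Lemma expect_tensor_blk_diag_Some :
  (forall r, v None r = 0) -> (forall l, v l None = 0) ->
  expect_tensor (blk_diag EL cL) (blk_diag ER cR) v =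
  expect_tensor EL ER (fun a b => v (Some a) (Some b)).
Proof.
move=> vN vN'; rewrite /expect_tensor big_option_None0; last first.
  by do 3![rewrite big1 // => ? _]; rewrite vN conjC0 !mul0r.
apply: eq_bigr => a _; rewrite big_option_None0; last first.
  by do 2![rewrite big1 // => ? _]; rewrite vN mulr0.
apply: eq_bigr => a' _; rewrite big_option_None0; last first.
  by rewrite big1 // => ? _; rewrite vN' conjC0 !mul0r.
apply: eq_bigr => b _; rewrite big_option_None0 ?vN' ?mulr0 //.
Qed.

Lemma expect_tensor_blk_diag_None :
  (forall a r, v (Some a) r = 0) -> (forall l b, v l (Some b) = 0) ->
  expect_tensor (blk_diag EL cL) (blk_diag ER cR) v =
  cL * cR * ((v None None)^* * v None None).
Proof.
move=> vS vS'; rewrite /expect_tensor big_option_Some0 => [|a]; last first.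
  by do 3![rewrite big1 // => ? _]; rewrite vS conjC0 !mul0r.
rewrite big_option_Some0 => [|a]; last by do 2![rewrite big1 // => ? _]; rewrite vS mulr0.
rewrite big_option_Some0 => [|b]; last by rewrite big1 // => ? _; rewrite vS' conjC0 !mul0r.
rewrite big_option_Some0 => [|b]; last by rewrite vS' mulr0.
by rewrite /=; ring.
Qed.

End BlockExpectation.

End Operators.

Section Averages.
Variables (R : realType) (T : finType) (S : {set T}).
Local Notation C := R[i].

Lemma eq_avg (f g : T -> C) : f =1 g -> avg S f = avg S g.
Proof. by move=> fg; rewrite /avg (eq_bigr _ (fun x _ => fg x)). Qed.

Lemma avgD (f g : T -> C) : avg S (fun x => f x + g x) = avg S f + avg S g.
Proof. by rewrite /avg big_split mulrDr. Qed.

Lemma avgB (f g : T -> C) : avg S (fun x => f x - g x) = avg S f - avg S g.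
Proof. by rewrite /avg sumrB mulrBr. Qed.

Lemma avgZ (c : C) (f : T -> C) : avg S (fun x => c * f x) = c * avg S f.
Proof. by rewrite /avg -mulr_sumr mulrCA. Qed.

Lemma avg_cst x0 (c : C) : x0 \in S -> avg S (fun=> c) = c.
Proof.
move=> x0S; rewrite /avg sumr_const -[c *+ _]mulr_natl mulKf //.
by rewrite pnatr_eq0 -lt0n; apply/card_gt0P; exists x0.
Qed.

Lemma avgDr x0 (f : T -> C) c : x0 \in S -> avg S (fun x => f x + c) = avg S f + c.
Proof. by move=> x0S; rewrite avgD (avg_cst _ x0S). Qed.

Lemma avg_affine x0 (f g : T -> C) c : x0 \in S ->
  avg S (fun x => f x + c * (1 - g x)) = avg S f + c * (1 - avg S g).
Proof. by move=> x0S; rewrite avgD avgZ avgB (avg_cst _ x0S). Qed.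

Lemma avg_ge0 (f : T -> C) : (forall x, 0 <= f x) -> 0 <= avg S f.
Proof. by move=> f_ge0; rewrite mulr_ge0 ?invr_ge0 ?ler0n ?sumr_ge0. Qed.

End Averages.

Section CosetStates.
Variables (R : realType) (n : nat) (U : mat n) (s t : vec n).
Local Notation C := R[i].

Lemma sgn_normsq b : (sgn R b)^* * sgn R b = 1.
Proof. by rewrite /sgn; case: (b == 0); rewrite ?rmorphN rmorph1 ?mulrNN mulr1. Qed.

Lemma coset_stateE x :
  coset_state R U s t x = (sqrtC #|subA U|%:R)^-1 *
    (if x - s \in subA U then sgn R (ip (x - s) t) else 0).
Proof.
congr (_ * _); rewrite big_mkcond (bigD1 (x - s)) //= subrK eqxx mulr1.
rewrite big1 ?addr0 // => a /negbTE a_neq; case: ifP => // _.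
by rewrite -subr_eq eq_sym a_neq mulr0.
Qed.

Lemma coset_state_normsq :
  \sum_x (coset_state R U s t x)^* * coset_state R U s t x = 1.
Proof.
set N : C := #|subA U|%:R.
have N_gt0 : 0 < N.
  rewrite ltr0n; apply/card_gt0P; exists 0; apply/imsetP; exists 0; last by rewrite mulmx0.
  by rewrite inE; apply/forallP => i; rewrite mxE eqxx implybT.
transitivity (\sum_x N^-1 * (x - s \in subA U)%:R).
  apply: eq_bigr => x _; rewrite coset_stateE rmorphM /= mulrACA.
  rewrite geC0_conj ?invr_ge0 ?sqrtC_ge0 ?ltW // -expr2 exprVn sqrtCK.
  by case: ifP => _; rewrite ?sgn_normsq ?conjC0 ?mul0r.
rewrite -mulr_sumr (reindex_inj (addIr s)) /=.
under eq_bigr do rewrite addrK.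
by rewrite -natr_sum -big_mkcond /= sum1_card mulVf ?gt_eqF.
Qed.

End CosetStates.

Section Asymptotics.
Variable R : realType.
Local Notation C := R[i].

(* Also holds for [p = 0], where both divisions return [0]. *)
Lemma ler_div_half_of_guess (w p v : C) :
  0 <= p -> w + 2^-1 * (1 - p) <= 2^-1 + v -> w / p <= 2^-1 + v / p.
Proof.
rewrite le_eqVlt => /orP[/eqP <- _|p_gt0].
  by rewrite !invr0 !mulr0 addr0 invr_ge0 ler0n.
have -> : 2^-1 + v / p = (2^-1 * p + v) / p by field; rewrite gt_eqF.
rewrite ler_pM2r ?invr_gt0 // => wle; rewrite -(lerD2r (2^-1 * (1 - p))).
by rewrite (_ : 2^-1 * p + v + _ = 2^-1 + v) //; ring.
Qed.

Lemma negligible_div_noticeable (nu p : nat -> C) :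
  negligible nu -> noticeable p -> negligible (fun lam => nu lam / p lam).
Proof.
move=> nu_negl [c [N p_ge]] d; have [M nu_le] := nu_negl (d + c)%N.
exists (maxn M N.+1) => lam; rewrite geq_max => /andP[leM ltN].
have lam_gt0 : 0 < (lam%:R : C) by rewrite ltr0n; apply: leq_trans ltN.
have lamc_gt0 : 0 < (lam%:R ^+ c : C) by rewrite exprn_gt0.
have p_gt0 : 0 < p lam by apply: lt_le_trans (p_ge lam (ltnW ltN)); rewrite invr_gt0.
have invp_le : (p lam)^-1 <= lam%:R ^+ c.
  by rewrite -[lam%:R ^+ c]invrK lef_pV2 ?posrE ?invr_gt0 // p_ge // ltnW.
have -> : (lam%:R ^+ d : C)^-1 = (lam%:R ^+ (d + c))^-1 * lam%:R ^+ c.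
  by rewrite exprD invfM mulfVK // gt_eqF.
rewrite normrM normfV (gtr0_norm p_gt0).
by apply: ler_pM => //; [rewrite invr_ge0 ltW | exact: nu_le].
Qed.

End Asymptotics.

Lemma Pr_notbot_ge0 (R : realType) n (A : adversary R n) : 0 <= Pr_notbot A.
Proof.
do 3![apply: avg_ge0 => ?]; do 3![apply: sumr_ge0 => ? _].
by rewrite mulrC mul_conjC_ge0.
Qed.

Section Completion.
Variables (R : realType) (n : nat) (A : adversary R n).
Local Notation C := R[i].

Definition abort_op : op R (vec n) := subop (@idop R _) (KdK A).

Definition completed_kraus (k : KI A + 'I_#|vec n|) (l : option (TL A))
    (r : option (TR A)) (x : vec n) : C :=
  match k, l, r with
  | inl i, Some a, Some b => @kraus R n A i a b x
  | inr j, None, None => psd_factor abort_op j x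
  | _, _, _ => 0 end.

Definition completion : adversary R n :=
  @Adversary R n (option (TL A)) (option (TR A)) _ completed_kraus
    (fun U r => blk_diag (@effL R n A U r) 2^-1)
    (fun U r => blk_diag (@effR R n A U r) 2^-1).

Hypothesis A_valid : valid_adv A.

Lemma KdK_completion : KdK completion = @idop R _.
Proof.
have abort_psd : psd abort_op := proj1 A_valid.
apply: functional_extensionality => x; apply: functional_extensionality => y.
rewrite /KdK big_sumType /=.
have -> : \sum_k \sum_l \sum_r
    (completed_kraus (inl k) l r x)^* * completed_kraus (inl k) l r y = KdK A x y.
  apply: eq_bigr => k _.
  rewrite big_option_None0; last by rewrite big1 // => r _; rewrite /= conjC0 mul0r.
  by apply: eq_bigr => a _; rewrite big_option_None0 //= conjC0 mul0r.
have -> : \sum_j \sum_l \sum_r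
    (completed_kraus (inr j) l r x)^* * completed_kraus (inr j) l r y = abort_op x y.
  rewrite (psd_factorE abort_psd); apply: eq_bigr => j _.
  rewrite big_option_Some0 => [|a]; last by rewrite big1 // => r _; rewrite /= conjC0 mul0r.
  by rewrite big_option_Some0 // => b; rewrite /= conjC0 mul0r.
by rewrite /abort_op /subop addrC subrK.
Qed.

Lemma completion_valid : valid_adv completion /\ nonaborting completion.
Proof.
have [_ [effL_A effR_A]] := A_valid.
have half_01 : 0 <= (2^-1 : C) <= 1 by rewrite invr_ge0 ler0n invf_le1 ?ler1n ?ltr0n.
split; last exact: KdK_completion.
split; last by split=> U r; apply: effect_blk_diag.
rewrite KdK_completion (_ : subop _ _ = fun _ _ => 0); first exact: psd0.
apply: functional_extensionality => x; apply: functional_extensionality => y.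
by rewrite /subop subrr.
Qed.

Section Outcomes.
Variables (U : mat n) (s t : vec n).
Local Notation psi := (coset_state R U s t).

Lemma p_cont_qform : p_cont A U s t = qform (KdK A) psi.
Proof.
rewrite /p_cont /KdK -qform_sum; apply: eq_bigr => k _.
by rewrite -qform_sum; apply: eq_bigr => l _; rewrite qform_kraus.
Qed.

Definition abort_amp (j : 'I_#|vec n|) : C := \sum_x psd_factor abort_op j x * psi x.

Lemma abort_amp_normsq : \sum_j (abort_amp j)^* * abort_amp j = 1 - p_cont A U s t.
Proof.
have abort_psd : psd abort_op := proj1 A_valid.
rewrite qform_kraus (_ : (fun x y => _) = abort_op); last first.
  apply: functional_extensionality => x; apply: functional_extensionality => y.
  by rewrite -psd_factorE.
by rewrite qformB qform_id coset_state_normsq p_cont_qform.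
Qed.

Lemma p_outE (B : adversary R n) rL rR bl br : p_out B U s t rL rR bl br =
  \sum_k expect_tensor (povm_el (@effL R n B U rL) bl) (povm_el (@effR R n B U rR) br)
    (@out_vec R n B U s t k).
Proof. by []. Qed.

Lemma p_out_completion rL rR bl br :
  p_out completion U s t rL rR bl br =
  p_out A U s t rL rR bl br + 4^-1 * (1 - p_cont A U s t).
Proof.
rewrite !p_outE big_sumType /= !povm_el_blk_diag; congr (_ + _).
  apply: eq_bigr => k _; rewrite expect_tensor_blk_diag_Some //.
  - by move=> r; rewrite /out_vec big1 // => x _; rewrite /= mul0r.
  - by move=> [a|]; rewrite /out_vec big1 // => x _; rewrite /= mul0r.
rewrite -abort_amp_normsq mulr_sumr; apply: eq_bigr => j _.
have half b : (if b then 2^-1 else 1 - 2^-1 : C) = 2^-1 by case: b => //; field.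
rewrite expect_tensor_blk_diag_None => [|a r|l b].
- have -> : @out_vec R n completion U s t (inr j) None None = abort_amp j by [].
  by rewrite !half; field.
- by rewrite /out_vec big1 // => x _; rewrite /= mul0r.
- by rewrite /out_vec big1 // => x _; case: l; rewrite /= mul0r.
Qed.

Lemma win_completion rL rR :
  \sum_(bl : bool) \sum_(br : bool) ((bl (+) br) == (ip rL s + ip rR t != 0))%:R *
    p_out completion U s t rL rR bl br =
  \sum_(bl : bool) \sum_(br : bool) ((bl (+) br) == (ip rL s + ip rR t != 0))%:R *
    p_out A U s t rL rR bl br + 2^-1 * (1 - p_cont A U s t).
Proof. by rewrite !big_bool /= !p_out_completion; case: (_ != 0) => /=; field. Qed.

End Outcomes.

Lemma Pr_win_completion : Pr_win completion = Pr_win A + 2^-1 * (1 - Pr_notbot A).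
Proof.
have GL1 : 1%:M \in GL n by rewrite inE unitmx1.
have CS_A0 (U : mat n) : CanA U 0 \in CS_A U by apply/imsetP; exists 0.
have CS_Aperp0 (U : mat n) : CanAperp U 0 \in CS_Aperp U by apply/imsetP; exists 0.
rewrite /Pr_win /Pr_notbot -(avg_affine _ _ _ GL1); apply: eq_avg => U.
rewrite -(avg_affine _ _ _ (CS_A0 U)); apply: eq_avg => s.
rewrite -(avg_affine _ _ _ (CS_Aperp0 U)); apply: eq_avg => t.
rewrite -(avgDr _ _ (in_setT 0)); apply: eq_avg => rL.
by rewrite -(avgDr _ _ (in_setT 0)); apply: eq_avg => rR; rewrite win_completion.
Qed.

End Completion.

Unset Implicit Arguments.

Theorem mainTheorem3 (R : realType) (n : nat -> nat)
  (known_xor_bound : xor_game_bound R n)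
  (A : forall lam, adversary R (n lam))
  (hA : forall lam, valid_adv (A lam))
  (hnotbot : noticeable (fun lam => Pr_notbot (A lam))) :
  exists nu : nat -> R[i], negligible nu /\
    forall lam, Pr_win (A lam) / Pr_notbot (A lam) <= 2^-1 + nu lam.
Proof.
have [nu [nu_negl win_le]] :=
  known_xor_bound _ (fun lam => completion_valid (hA lam)).
exists (fun lam => nu lam / Pr_notbot (A lam)); split.
  exact: negligible_div_noticeable.
move=> lam; apply: ler_div_half_of_guess; first exact: Pr_notbot_ge0.
by rewrite -Pr_win_completion.
Qed.
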